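(* Let $\rho:\mathbb{Z}\to[0,\infty)$ be a weight with finite moments, and let $f,g$ be polynomials with $\deg f\le 2$, $\deg g\le 1$, satisfying $f(x+1)\rho(x+1)-f(x)\rho(x)=g(x)\rho(x)$ for all $x\in\mathbb{Z}$, and such that $\rho(x)f(x)$ vanishes at the end points of the support of $\rho$. Let $\{p_n\}_{n\ge0}$ be the monic polynomials ($\deg p_n=n$) orthogonal with respect to $\rho$: $\sum_{x\in\mathbb{Z}}p_m(x)p_n(x)\rho(x)=h_n\delta_{n,m}$ with $h_n>0$. Let $\mathcal{A}_{\rm l}=g(x)T+f(x)(\Delta+\nabla)$ with $T\phi(x)=\phi(x+1)$, $\Delta\phi(x)=\phi(x+1)-\phi(x)$, $\nabla\phi(x)=\phi(x)-\phi(x-1)$. Then there are real constants $c_n$ ($n\ge0$), depending only on $n$, $f$ and $g$, such that for all $n\ge0$ $$\mathcal{A}_{\rm l}p_n(x)=-\frac{c_n}{h_{n+1}}p_{n+1}(x)+\frac{c_{n-1}}{h_{n-1}}p_{n-1}(x)$$ (with the convention $p_{-1}=0$). Equivalently, with $\langle\phi,\psi\rangle=\sum_{x\in\mathbb{Z}}\phi(x)\psi(x)\rho(x)$, one has $\langle p_j,\mathcal{A}_{\rm l}p_k\rangle=c_j\delta_{k,j+1}-c_k\delta_{j,k+1}$ for all $j,k\ge0$.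
   Context: $\rho$ is taken to be zero outside its support; the orthogonal polynomials are assumed to exist for all degrees $n\ge0$. *)

From HB Require Import structures.
From mathcomp Require Import all_boot all_order all_algebra.
From mathcomp Require Import all_classical all_reals all_analysis.
Set Implicit Arguments. Unset Strict Implicit. Unset Printing Implicit Defensive.
Import Order.TTheory GRing.Theory Num.Theory numFieldNormedType.Exports.
Local Open Scope ring_scope.

Section Defs.
Variable R : realType.

Definition pevZ (p : {poly R}) (x : int) : R := p.[x%:~R].

(* Sum over Z of u : int -> R, as the sum of the series over x = 0,1,2,...
   and over x = -1,-2,-3,... (Negz n = -(n+1)). *)
Definition sumZ (u : int -> R) : R :=
  limn (series (fun n : nat => u (Posz n))) +
  limn (series (fun n : nat => u (Negz n))).

Definition finite_moments (rho : int -> R) : Prop :=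
  forall k : nat,
    cvgn (series (fun n : nat => `|(Posz n)%:~R : R| ^+ k * rho (Posz n))) /\
    cvgn (series (fun n : nat => `|(Negz n)%:~R : R| ^+ k * rho (Negz n))).

Definition ipZ (rho : int -> R) (phi psi : int -> R) : R :=
  sumZ (fun x => phi x * psi x * rho x).

Definition shiftT (phi : int -> R) : int -> R := fun x => phi (x + 1).
Definition fwdD (phi : int -> R) : int -> R := fun x => phi (x + 1) - phi x.
Definition bwdD (phi : int -> R) : int -> R := fun x => phi x - phi (x - 1).

Definition Al (f g : {poly R}) (phi : int -> R) : int -> R :=
  fun x => pevZ g x * shiftT phi x + pevZ f x * (fwdD phi x + bwdD phi x).

End Defs.

From HB Require Import structures.
From mathcomp Require Import all_boot all_order all_algebra.
From mathcomp Require Import all_classical all_reals all_analysis.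
From mathcomp Require Import ring zify.
Set Implicit Arguments. Unset Strict Implicit. Unset Printing Implicit Defensive.
Import Order.TTheory GRing.Theory Num.Theory numFieldNormedType.Exports.
Local Open Scope classical_set_scope.
Local Open Scope ring_scope.

(* Summing the Pearson equation against u(x) v(x+1) and shifting the summation
   index shows that the polynomial form A of A_l is skew-symmetric for the
   moment functional L(P) = sum_x P(x) rho(x): L(u A v) = - L(v A u).  As A
   raises degrees by at most one, <p_j, A p_k> vanishes by orthogonality when
   j > k + 1, and then by skewness when k > j + 1 or j = k; only
   c_j = <p_j, A p_(j+1)> and -c_j survive, and expanding A p_n in the
   orthogonal basis gives the three-term formula. *)

Section SumZ.
Variable R : realType.

Lemma cvg_series_shiftS (u : R ^nat) (l : R) :
  series (fun n => u n.+1) @ \oo --> l <-> series u @ \oo --> u 0%N + l.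
Proof.
set s := series (fun n => u n.+1).
have seriesS_shift : (fun n => series u n.+1) = (fun n => u 0%N + s n).
  by apply: funext => n; rewrite /series /= big_nat_recl.
rewrite -(cvg_shiftS (series u)) /= seriesS_shift.
split=> [|ul]; first exact: cvgD (cvg_cst _).
have -> : l = u 0%N + l - u 0%N by ring.
have -> : s = (fun n => u 0%N + s n - u 0%N) by apply: funext => n; ring.
exact: cvgB ul (cvg_cst _).
Qed.

Definition summableZ (u : int -> R) : Prop :=
  cvgn (series (fun n : nat => u (Posz n))) /\
  cvgn (series (fun n : nat => u (Negz n))).

Lemma summableZ0 : summableZ (fun=> 0).
Proof.
have series0 : series (fun=> 0 : R) = fun=> 0.
  by apply: funext => n; rewrite /series /= big1.
by split; rewrite series0; apply: is_cvg_cst.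
Qed.

Lemma summableZD u v : summableZ u -> summableZ v -> summableZ (fun x => u x + v x).
Proof. by move=> [up un] [vp vn]; split; apply: is_cvg_seriesD. Qed.

Lemma summableZZ k u : summableZ u -> summableZ (fun x => k * u x).
Proof.
by move=> [up un]; split; [exact: (@is_cvg_seriesZ _ _ k up)|exact: (@is_cvg_seriesZ _ _ k un)].
Qed.

Lemma summableZ_sum (I : Type) (r : seq I) (F : I -> int -> R) :
  (forall i, summableZ (F i)) -> summableZ (fun x => \sum_(i <- r) F i x).
Proof.
move=> sF; elim: r => [|i r IHr].
  by under [fun x => _]funext do rewrite big_nil; exact: summableZ0.
by under [fun x => _]funext do rewrite big_cons; exact: summableZD.
Qed.

Lemma sumZD u v : summableZ u -> summableZ v ->
  sumZ (fun x => u x + v x) = sumZ u + sumZ v.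
Proof.
move=> [up un] [vp vn]; rewrite /sumZ.
by rewrite (lim_seriesD up vp) (lim_seriesD un vn) addrACA.
Qed.

Lemma sumZZ k u : summableZ u -> sumZ (fun x => k * u x) = k * sumZ u.
Proof.
have limZ (w : R ^nat) : cvgn (series w) ->
    limn (series (fun n => k * w n)) = k * limn (series w).
  by move=> cw; exact: (lim_seriesZ k cw).
by move=> [up un]; rewrite /sumZ mulrDr (limZ _ up) (limZ _ un).
Qed.

Lemma sumZ_shift u : summableZ u -> sumZ u = sumZ (fun x => u (x + 1)).
Proof.
move=> [/cvg_ex[/= lp up] /cvg_ex[/= ln un]].
have vp : series (fun n : nat => u (Posz n + 1)) @ \oo --> lp - u (Posz 0).
  have -> : (fun n : nat => u (Posz n + 1)) = (fun n => u (Posz n.+1)).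
    by apply: funext => n; rewrite -addn1 PoszD.
  by apply/(cvg_series_shiftS (fun n => u (Posz n))); rewrite addrC subrK.
have vn : series (fun n : nat => u (Negz n + 1)) @ \oo --> u (Posz 0) + ln.
  apply/(cvg_series_shiftS (fun n : nat => u (Negz n + 1))).
  have -> : (fun n : nat => u (Negz n.+1 + 1)) = (fun n => u (Negz n)).
    by apply: funext => n; rewrite !NegzE -addn1 PoszD; congr u; ring.
  exact: un.
rewrite /sumZ (cvg_lim _ up) ?(cvg_lim _ un) ?(cvg_lim _ vp) ?(cvg_lim _ vn) //.
ring.
Qed.

End SumZ.

Section PolyShift.
Variable R : idomainType.
Implicit Types P Q : {poly R}.

Definition shiftp (d : int) P : {poly R} := P \Po ('X + d%:~R%:P).

Lemma size_shiftp d P : size (shiftp d P) = size P.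
Proof. by rewrite size_comp_poly2 // size_XaddC. Qed.

Lemma lead_coef_shiftp d P : lead_coef (shiftp d P) = lead_coef P.
Proof.
by rewrite lead_coef_comp ?size_XaddC // (monicP (monicXaddC _)) expr1n mulr1.
Qed.

Lemma size_sub_same_lead P Q : size P = size Q -> lead_coef P = lead_coef Q ->
  (size (P - Q)%R <= (size P).-1)%N.
Proof.
move=> eq_size eq_lead; apply/leq_sizeP => j le_j; rewrite coefB.
have [->|ne_j] := eqVneq j (size P).-1.
  by rewrite -lead_coefE [in X in _ - X]eq_size -lead_coefE eq_lead subrr.
have lt_j : ((size P).-1 < j)%N by rewrite ltn_neqAle eq_sym ne_j.
by rewrite !nth_default ?subrr // -?eq_size; move: lt_j; case: (size P).
Qed.

Lemma size_shiftpB d e P : (size (shiftp d P - shiftp e P)%R <= (size P).-1)%N.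
Proof.
rewrite -(size_shiftp d P); apply: size_sub_same_lead.
  by rewrite !size_shiftp.
by rewrite !lead_coef_shiftp.
Qed.

End PolyShift.

Lemma pevZ_shiftp (R : realType) (d : int) (P : {poly R}) (x : int) :
  pevZ (shiftp d P) x = pevZ P (x + d).
Proof. by rewrite /pevZ horner_comp !hornerE intrD. Qed.

Section MomentFunctional.
Variables (R : realType) (rho : int -> R).
Hypothesis moments : finite_moments rho.
Implicit Types P Q : {poly R}.

Lemma summableZ_moment k : summableZ (fun x : int => (x%:~R : R) ^+ k * rho x).
Proof.
have [mp mn] := moments k; split.
  by under [fun n => _]funext do rewrite -[X in X ^+ k]ger0_norm ?ler0z //.
have -> : (fun n : nat => ((Negz n)%:~R : R) ^+ k * rho (Negz n)) =
    (fun n => (-1) ^+ k * (`|(Negz n)%:~R : R| ^+ k * rho (Negz n))).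
  apply: funext => n.
  by rewrite ler0_norm ?lerz0 // mulrA -exprMn mulN1r opprK.
exact: (@is_cvg_seriesZ _ _ ((-1) ^+ k) mn).
Qed.

Lemma summableZ_pevZ P : summableZ (fun x => pevZ P x * rho x).
Proof.
have -> : (fun x => pevZ P x * rho x) =
    (fun x => \sum_(i < size P) P`_i * ((x%:~R : R) ^+ i * rho x)).
  apply: funext => x; rewrite /pevZ horner_coef mulr_suml.
  by apply: eq_bigr => i _; rewrite mulrA.
by apply: summableZ_sum => i; apply/summableZZ/summableZ_moment.
Qed.

Definition Lrho P : R := sumZ (fun x => pevZ P x * rho x).

Lemma Lrho_is_linear : linear_for *%R Lrho.
Proof.
move=> a P Q; rewrite /Lrho -sumZZ; last exact: summableZ_pevZ.
rewrite -sumZD; [|exact/summableZZ/summableZ_pevZ|exact: summableZ_pevZ].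
by congr sumZ; apply: funext => x; rewrite /pevZ !hornerE /=; ring.
Qed.

HB.instance Definition _ :=
  GRing.isLinear.Build R {poly R} R *%R Lrho Lrho_is_linear.

Definition Lrho_scalar : {scalar {poly R}} := Lrho.

Lemma Lrho_shift P : Lrho P = sumZ (fun x => pevZ P (x + 1) * rho (x + 1)).
Proof. exact/sumZ_shift/summableZ_pevZ. Qed.

End MomentFunctional.

Lemma ipZ_pevZ (R : realType) (rho : int -> R) (P Q : {poly R}) :
  ipZ rho (pevZ P) (pevZ Q) = Lrho rho (P * Q).
Proof. by congr sumZ; apply: funext => x; rewrite /pevZ hornerM. Qed.

Section DifferenceOperator.
Variables (R : realType) (f g : {poly R}).
Implicit Types P u v : {poly R}.

Definition Apoly P : {poly R} := g * shiftp 1 P + f * (shiftp 1 P - shiftp (-1) P).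

Lemma Al_pevZ P : Al f g (pevZ P) = pevZ (Apoly P).
Proof.
apply: funext => x; rewrite /Al /shiftT /fwdD /bwdD /Apoly.
by rewrite -!pevZ_shiftp /pevZ !hornerE /=; ring.
Qed.

Lemma size_Apoly n P : (size f <= 3)%N -> (size g <= 2)%N ->
  (size P <= n.+1)%N -> (size (Apoly P) <= n.+2)%N.
Proof.
move=> size_f size_g size_P; rewrite /Apoly.
apply: leq_trans (size_polyD _ _) _; rewrite geq_max; apply/andP; split.
  apply: leq_trans (size_polyMleq _ _) _.
  by rewrite size_shiftp -subn1 leq_subLR add1n; exact: (leq_add size_g size_P).
apply: leq_trans (size_polyMleq _ _) _.
rewrite -subn1 leq_subLR add1n; apply: leq_add size_f _.
by apply: leq_trans (size_shiftpB 1 (-1) P) _; rewrite -subn1 leq_subLR add1n.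
Qed.

Variable rho : int -> R.
Hypothesis moments : finite_moments rho.
Hypothesis pearson : forall x : int,
  pevZ f (x + 1) * rho (x + 1) - pevZ f x * rho x = pevZ g x * rho x.

Lemma Lrho_mul_Apoly u v : Lrho rho (u * Apoly v) =
  Lrho rho (shiftp (-1) u * v * f) - Lrho rho (u * shiftp (-1) v * f).
Proof.
have -> : u * Apoly v = u * (f + g) * shiftp 1 v - u * shiftp (-1) v * f.
  by rewrite /Apoly; ring.
rewrite linearB /= (Lrho_shift moments (_ * v * f)); congr (_ - _).
congr sumZ; apply: funext => x.
have fg_rho : (pevZ f x + pevZ g x) * rho x = pevZ f (x + 1) * rho (x + 1).
  by rewrite -[RHS](subrK (pevZ f x * rho x)) pearson; ring.
by rewrite /pevZ !hornerE -!/(pevZ _ _) !pevZ_shiftp addrK -!mulrA -fg_rho; ring.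
Qed.

Lemma Lrho_Apoly_skew u v : Lrho rho (u * Apoly v) = - Lrho rho (v * Apoly u).
Proof. by rewrite !Lrho_mul_Apoly opprB; congr (_ - _); congr Lrho; ring. Qed.

End DifferenceOperator.

Section OrthogonalBasis.
Variables (R : numFieldType) (L : {scalar {poly R}}).
Variables (p : nat -> {poly R}) (h : nat -> R).
Hypothesis p_monic : forall n, p n \is monic.
Hypothesis size_p : forall n, size (p n) = n.+1.
Hypothesis h_neq0 : forall n, h n != 0.
Hypothesis L_orth : forall m n, L (p m * p n) = h n * (n == m)%:R.
Implicit Types P Q : {poly R}.

Lemma span_monic_basis N Q : (size Q <= N)%N ->
  exists a : nat -> R, Q = \sum_(k < N) a k *: p k.
Proof.
elim: N Q => [|N IHN] Q size_Q.
  by exists (fun=> 0); rewrite big_ord0; apply/size_poly_leq0P.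
have /IHN[a def_Q] : (size (Q - Q`_N *: p N)%R <= N)%N.
  apply/leq_sizeP => j le_Nj; rewrite coefB coefZ.
  have [<-|ne_jN] := eqVneq N j.
    have -> : (p N)`_N = lead_coef (p N) by rewrite lead_coefE size_p.
    by rewrite (monicP (p_monic N)) mulr1 subrr.
  have lt_Nj : (N < j)%N by rewrite ltn_neqAle ne_jN.
  rewrite (nth_default 0 (leq_trans size_Q lt_Nj)) [(p N)`_j]nth_default ?size_p //.
  by rewrite mulr0 subrr.
exists (fun k => if k == N then Q`_N else a k).
rewrite big_ord_recr /= eqxx -[LHS](subrK (Q`_N *: p N)) def_Q.
by congr (_ + _); apply: eq_bigr => k _; rewrite ltn_eqF.
Qed.

Lemma L_mulrZ a P Q : L (P * (a *: Q)) = a * L (P * Q).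
Proof. by rewrite -scalerAr; exact: scalarZ. Qed.

Lemma L_orth_low n Q : (size Q <= n)%N -> L (p n * Q) = 0.
Proof.
move=> /span_monic_basis[a ->]; rewrite mulr_sumr linear_sum big1 // => k _.
by rewrite L_mulrZ L_orth ltn_eqF // !mulr0.
Qed.

Lemma orth_expansion N Q : (size Q <= N)%N ->
  Q = \sum_(k < N) (L (p k * Q) / h k) *: p k.
Proof.
move=> /span_monic_basis[a def_Q]; rewrite {1}def_Q.
apply: eq_bigr => k _; congr (_ *: _).
rewrite def_Q mulr_sumr linear_sum (bigD1 k) //= big1 => [|i ne_ik].
  by rewrite L_mulrZ L_orth eqxx mulr1 addr0 mulfK.
have /negbTE ne_ik_nat : (i : nat) != k := ne_ik.
by rewrite L_mulrZ L_orth ne_ik_nat !mulr0.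
Qed.

Variable A : {poly R} -> {poly R}.
Hypothesis A_skew : forall P Q, L (P * A Q) = - L (Q * A P).
Hypothesis size_A : forall n P, (size P <= n.+1)%N -> (size (A P) <= n.+2)%N.

Definition skew_coef j := L (p j * A (p j.+1)).

Lemma L_mulA_diag P : L (P * A P) = 0.
Proof.
by have /eqP := A_skew P P; rewrite -addr_eq0 -mulr2n mulrn_eq0 => /eqP.
Qed.

Lemma L_mulA_far j k : (k.+1 < j)%N -> L (p j * A (p k)) = 0.
Proof.
move=> lt_kj; apply: L_orth_low; apply: leq_trans lt_kj.
by apply: size_A; rewrite size_p.
Qed.

Lemma L_mulA_basis j k :
  L (p j * A (p k)) = skew_coef j * (k == j.+1)%:R - skew_coef k * (j == k.+1)%:R.
Proof.
have [lt_jk|lt_kj|->] := ltngtP j k; last by rewrite L_mulA_diag ltn_eqF // mulr0 subr0.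
- rewrite (ltn_eqF (leqW lt_jk)) mulr0 subr0.
  have [->|ne_k] := eqVneq k j.+1; first by rewrite mulr1.
  by rewrite A_skew L_mulA_far ?mulr0 ?oppr0 //; move: ne_k lt_jk; lia.
- rewrite (ltn_eqF (leqW lt_kj)) mulr0 sub0r.
  have [->|ne_j] := eqVneq j k.+1; first by rewrite A_skew mulr1.
  by rewrite L_mulA_far ?mulr0 ?oppr0 //; move: ne_j lt_kj; lia.
Qed.

Lemma A_three_term n : A (p n) =
  - (skew_coef n / h n.+1) *: p n.+1 +
  (if n is n'.+1 then (skew_coef n' / h n') *: p n' else 0).
Proof.
rewrite [LHS](orth_expansion (size_A (eq_leq (size_p n)))).
under eq_bigr do rewrite L_mulA_basis.
rewrite big_ord_recr /= eqxx (ltn_eqF (leqW (ltnSn n))) mulr0 mulr1 sub0r mulNr addrC.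
congr (_ + _); case: n => [|n]; first by rewrite big_ord1 /= mulr0 subrr mul0r scale0r.
rewrite big_ord_recr /= subrr mul0r scale0r addr0.
rewrite big_ord_recr /= eqxx (ltn_eqF (leqW (ltnSn n))) mulr0 mulr1 subr0.
rewrite big1 ?add0r // => i _.
have lt_in : (i < n)%N := ltn_ord i.
have lt_in2 : (i < n.+2)%N by lia.
by rewrite eqSS (gtn_eqF lt_in) (ltn_eqF lt_in2) !mulr0 subrr mul0r scale0r.
Qed.

End OrthogonalBasis.

Theorem proposition3p8 (R : realType) (rho : int -> R) (f g : {poly R})
  (p : nat -> {poly R}) (h : nat -> R) :
  (forall x, 0 <= rho x) ->
  finite_moments rho ->
  (size f <= 3)%N -> (size g <= 2)%N ->
  (forall x : int,
     pevZ f (x + 1) * rho (x + 1) - pevZ f x * rho x = pevZ g x * rho x) ->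
  (* rho f vanishes at the end points of the support of rho (when they exist) *)
  (forall a : int, rho a != 0 -> (forall x : int, x < a -> rho x = 0) ->
     pevZ f a * rho a = 0) ->
  (forall b : int, rho b != 0 -> (forall x : int, b < x -> rho x = 0) ->
     pevZ f b * rho b = 0) ->
  (forall n, p n \is monic) -> (forall n, size (p n) = n.+1) ->
  (forall n, 0 < h n) ->
  (forall m n, ipZ rho (pevZ (p m)) (pevZ (p n)) = h n * (n == m)%:R) ->
  exists c : nat -> R,
    (forall (n : nat) (x : int),
       Al f g (pevZ (p n)) x =
         - (c n / h n.+1) * pevZ (p n.+1) x
         + (if n is n'.+1 then c n' / h n' * pevZ (p n') x else 0)) /\
    (forall j k : nat,
       ipZ rho (pevZ (p j)) (Al f g (pevZ (p k))) =
         c j * (k == j.+1)%:R - c k * (j == k.+1)%:R).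
Proof.
move=> _ moments size_f size_g pearson _ _ p_monic size_p h_gt0 orth.
pose L := Lrho_scalar moments.
have L_orth m n : L (p m * p n) = h n * (n == m)%:R by rewrite -orth ipZ_pevZ.
have h_neq0 n : h n != 0 by rewrite gt_eqF.
have A_skew := Lrho_Apoly_skew moments pearson.
have size_A n P := @size_Apoly _ f g n P size_f size_g.
exists (skew_coef L p (Apoly f g)); split=> [n x|j k].
  rewrite Al_pevZ (A_three_term p_monic size_p h_neq0 L_orth A_skew size_A).
  by case: n => [|n]; rewrite /pevZ !hornerE.
by rewrite Al_pevZ ipZ_pevZ (L_mulA_basis p_monic size_p L_orth A_skew size_A).
Qed.
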